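(* Let $J\ge 1$ be an integer, let $N_p,N_a$ be positive integers and $P_t,P_a,M,\kappa_B,\kappa_U,\kappa_I,\sigma^2$ be positive reals with $N_p\kappa_I<1$. Set $C_a=P_aN_a\kappa_U^2$ and $C_t=P_tM\kappa_B^2$, and for $l\in\{1,\dots,J\}$ define $$Q(l)=\frac{C_aC_tN_a(N_p\kappa_I)^{2(J-1)}+\sigma^2C_a(N_p\kappa_I)^{2(J-l)}}{C_t(N_p\kappa_I)^{2(l-1)}+\sigma^2}.$$ Then the optimal solution of $\max_{l\in\{1,\dots,J\}}Q(l)$ is $l_2^\star=J$.
   Context: Physical setting (for interpretation): an $M$-antenna base station with transmit power $P_t$ transfers energy to a single-antenna user over a cascaded line-of-sight path through $J$ intelligent reflecting surfaces numbered $1,\dots,J$ in order from the base station; surface $l$ is active ($N_a$ elements, per-element amplification power limit $P_a$) and the others are passive ($N_p$ elements each). $\kappa_B,\kappa_I,\kappa_U$ are the amplitude path gains of the base station–surface 1 link, each inter-surface link, and the surface $J$–user link; $\sigma^2$ is the amplification noise power per active element. With optimal beamforming, the user's received power as a function of the active surface index $l$ is $Q(l)$ above. Standing assumption: $N_p\kappa_I<1$. *)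

From Stdlib Require Import Reals Lra Lia.
Open Scope R_scope.

Definition Ca (Pa : R) (Na : nat) (kU : R) : R := Pa * INR Na * kU ^ 2.
Definition Ct (Pt M kB : R) : R := Pt * M * kB ^ 2.

Definition Q (J : nat) (Np Na : nat) (Pt Pa M kB kU kI sigma2 : R) (l : nat) : R :=
  let x := INR Np * kI in
  (Ca Pa Na kU * Ct Pt M kB * INR Na * x ^ (2 * (J - 1))
     + sigma2 * Ca Pa Na kU * x ^ (2 * (J - l)))
  / (Ct Pt M kB * x ^ (2 * (l - 1)) + sigma2).

(** With [x = Np kI] in (0,1), raising the index of the active surface
    lowers the exponent of [x] in the numerator of [Q] and raises the
    one in the denominator: the numerator strictly grows and the
    denominator strictly shrinks, so [Q] is strictly increasing on
    [{1, ..., J}] and its only maximizer is [J]. *)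
From Stdlib Require Import Reals Lra Lia.
Open Scope R_scope.

Lemma pow_lt_pow_contravar (x : R) (m n : nat) :
  0 < x < 1 -> (m < n)%nat -> x ^ n < x ^ m.
Proof.
  intros Hx Hmn.
  replace n with (m + (n - m))%nat by lia.
  rewrite pow_add.
  assert (Hxm : 0 < x ^ m) by (apply pow_lt; lra).
  assert (Hxnm : x ^ (n - m) < 1) by (apply pow_lt_1_compat; [lra | lia]).
  rewrite <- (Rmult_1_r (x ^ m)) at 2.
  now apply Rmult_lt_compat_l.
Qed.

Lemma Rdiv_lt_compat (a b c d : R) :
  0 <= a -> a < c -> 0 < d -> d < b -> a / b < c / d.
Proof.
  intros Ha Hac Hd Hdb.
  apply Rle_lt_trans with (a / d).
  - apply Rmult_le_compat_l; [lra |].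
    apply Rinv_le_contravar; lra.
  - apply Rmult_lt_compat_r; [apply Rinv_0_lt_compat |]; lra.
Qed.

Lemma Ca_gt0 (Pa : R) (Na : nat) (kU : R) :
  0 < Pa -> (0 < Na)%nat -> 0 < kU -> 0 < Ca Pa Na kU.
Proof.
  intros HPa HNa HkU; unfold Ca.
  assert (0 < INR Na) by (apply lt_0_INR; lia).
  assert (0 < kU ^ 2) by (apply pow_lt; lra).
  repeat apply Rmult_lt_0_compat; lra.
Qed.

Lemma Ct_gt0 (Pt M kB : R) : 0 < Pt -> 0 < M -> 0 < kB -> 0 < Ct Pt M kB.
Proof.
  intros HPt HM HkB; unfold Ct.
  assert (0 < kB ^ 2) by (apply pow_lt; lra).
  repeat apply Rmult_lt_0_compat; lra.
Qed.

Lemma Q_increasing (J Np Na : nat) (Pt Pa M kB kU kI sigma2 : R) (l l' : nat) :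
  (0 < Na)%nat ->
  0 < Pt -> 0 < Pa -> 0 < M -> 0 < kB -> 0 < kU -> 0 < sigma2 ->
  0 < INR Np * kI < 1 ->
  (1 <= l < l')%nat -> (l' <= J)%nat ->
  Q J Np Na Pt Pa M kB kU kI sigma2 l < Q J Np Na Pt Pa M kB kU kI sigma2 l'.
Proof.
  intros HNa HPt HPa HM HkB HkU Hs Hx Hll' Hl'J; unfold Q.
  set (x := INR Np * kI) in *.
  assert (HCa := Ca_gt0 Pa Na kU HPa HNa HkU).
  assert (HCt := Ct_gt0 Pt M kB HPt HM HkB).
  assert (HNa' : 0 < INR Na) by (apply lt_0_INR; lia).
  assert (Hnum : x ^ (2 * (J - l)) < x ^ (2 * (J - l')))
    by (apply pow_lt_pow_contravar; [exact Hx | lia]).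
  assert (Hden : x ^ (2 * (l' - 1)) < x ^ (2 * (l - 1)))
    by (apply pow_lt_pow_contravar; [exact Hx | lia]).
  assert (0 < x ^ (2 * (J - 1))) by (apply pow_lt; lra).
  assert (0 < x ^ (2 * (J - l))) by (apply pow_lt; lra).
  assert (0 < x ^ (2 * (l' - 1))) by (apply pow_lt; lra).
  apply Rdiv_lt_compat.
  - apply Rlt_le, Rplus_lt_0_compat; repeat apply Rmult_lt_0_compat; lra.
  - apply Rplus_lt_compat_l, Rmult_lt_compat_l; [apply Rmult_lt_0_compat |]; lra.
  - apply Rplus_lt_0_compat; [apply Rmult_lt_0_compat |]; lra.
  - apply Rplus_lt_compat_r, Rmult_lt_compat_l; lra.
Qed.

Theorem proposition2 (J Np Na : nat) (Pt Pa M kB kU kI sigma2 : R) :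
  (1 <= J)%nat -> (0 < Np)%nat -> (0 < Na)%nat ->
  0 < Pt -> 0 < Pa -> 0 < M -> 0 < kB -> 0 < kU -> 0 < kI -> 0 < sigma2 ->
  INR Np * kI < 1 ->
  (forall l : nat, (1 <= l <= J)%nat ->
     Q J Np Na Pt Pa M kB kU kI sigma2 l <= Q J Np Na Pt Pa M kB kU kI sigma2 J) /\
  (forall l : nat, (1 <= l <= J)%nat ->
     Q J Np Na Pt Pa M kB kU kI sigma2 l = Q J Np Na Pt Pa M kB kU kI sigma2 J ->
     l = J).
Proof.
  intros HJ HNp HNa HPt HPa HM HkB HkU HkI Hs Hx1.
  assert (Hx : 0 < INR Np * kI < 1).
  { split; [| exact Hx1].
    apply Rmult_lt_0_compat; [apply lt_0_INR; lia | lra]. }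
  assert (Hlt : forall l, (1 <= l < J)%nat ->
     Q J Np Na Pt Pa M kB kU kI sigma2 l < Q J Np Na Pt Pa M kB kU kI sigma2 J)
    by (intros l Hl; apply Q_increasing; auto; lia).
  split; intros l Hl; destruct (Nat.eq_dec l J) as [-> | Hne].
  - apply Rle_refl.
  - apply Rlt_le, Hlt; lia.
  - reflexivity.
  - intros Heq; specialize (Hlt l ltac:(lia)); lra.
Qed.
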